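(* Let $G$ be a group and $N\subseteq G$ a normal subgroup. If $G$ has no non-trivial narrow normal subgroups, then the center $Z(N)$ of $N$ is trivial.
   Context: A group is narrow if it contains no subgroup isomorphic to the free group $F_2$ of rank $2$. *)

From Stdlib Require Import List Bool.
Import ListNotations.

Record Group := {
  carrier :> Type;
  gmul : carrier -> carrier -> carrier;
  gone : carrier;
  ginv : carrier -> carrier;
  gmul_assoc : forall x y z, gmul x (gmul y z) = gmul (gmul x y) z;
  gmul_1l : forall x, gmul gone x = x;
  gmul_1r : forall x, gmul x gone = x;
  gmul_Vl : forall x, gmul (ginv x) x = gone;
  gmul_Vr : forall x, gmul x (ginv x) = gone
}.

Arguments gmul {G} : rename.
Arguments gone {G} : rename.
Arguments ginv {G} : rename.

Definition is_subgroup (G : Group) (H : G -> Prop) : Prop :=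
  H gone /\ (forall x y, H x -> H y -> H (gmul x y)) /\ (forall x, H x -> H (ginv x)).

Definition conj {G : Group} (g x : G) : G := gmul (gmul g x) (ginv g).

Definition is_normal (G : Group) (H : G -> Prop) : Prop :=
  is_subgroup G H /\ forall g x, H x -> H (conj g x).

Definition is_trivial (G : Group) (H : G -> Prop) : Prop :=
  forall x, H x -> x = gone.

Definition center (G : Group) (N : G -> Prop) : G -> Prop :=
  fun z => N z /\ forall n, N n -> gmul z n = gmul n z.

(* Letters of the free group F_2 on generators a (false) and b (true):
   (generator, inverted?) *)
Definition letter := (bool * bool)%type.

Definition inverse_letters (l1 l2 : letter) : Prop :=
  fst l1 = fst l2 /\ snd l1 <> snd l2.

Fixpoint reduced (w : list letter) : Prop :=
  match w with
  | [] => True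
  | l1 :: w' =>
      match w' with
      | [] => True
      | l2 :: _ => ~ inverse_letters l1 l2 /\ reduced w'
      end
  end.

Definition eval_letter {G : Group} (x y : G) (l : letter) : G :=
  let g := if fst l then y else x in if snd l then ginv g else g.

Definition eval_word {G : Group} (x y : G) (w : list letter) : G :=
  fold_right (fun l acc => gmul (eval_letter x y l) acc) gone w.

(* x, y freely generate a free subgroup of rank 2, i.e. the homomorphism
   F_2 -> G sending the basis to (x, y) is injective: no non-empty reduced
   word evaluates to the identity. *)
Definition free_pair {G : Group} (x y : G) : Prop :=
  forall w, reduced w -> w <> [] -> eval_word x y w <> gone.

Definition contains_F2 (G : Group) (H : G -> Prop) : Prop :=
  exists x y, H x /\ H y /\ free_pair x y.

Definition narrow (G : Group) (H : G -> Prop) : Prop := ~ contains_F2 G H.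

(* Z(N) is characteristic in the normal subgroup N, hence normal in G, and it
   is abelian; an abelian group is narrow because the commutator word
   x y x^-1 y^-1 vanishes on every pair of its elements. *)
From Stdlib Require Import List.
Import ListNotations.

Section GroupFacts.
Variable G : Group.

Lemma mul_cancel_l (a x y : G) : gmul a x = gmul a y -> x = y.
Proof.
  intro E. rewrite <- (gmul_1l G x), <- (gmul_1l G y), <- (gmul_Vl G a),
    <- !gmul_assoc, E. reflexivity.
Qed.

Lemma inv_inv (x : G) : ginv (ginv x) = x.
Proof.
  apply (mul_cancel_l (ginv x)). rewrite gmul_Vr, gmul_Vl. reflexivity.
Qed.

Lemma conj_mul (g x y : G) : conj g (gmul x y) = gmul (conj g x) (conj g y).
Proof.
  unfold conj. rewrite <- !gmul_assoc, (gmul_assoc _ (ginv g) g), gmul_Vl, gmul_1l.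
  reflexivity.
Qed.

Lemma conj_invK (g x : G) : conj g (conj (ginv g) x) = x.
Proof.
  unfold conj. rewrite inv_inv, !gmul_assoc, gmul_Vr, gmul_1l,
    <- gmul_assoc, gmul_Vr, gmul_1r. reflexivity.
Qed.

Lemma commuting_not_free_pair (x y : G) : gmul x y = gmul y x -> ~ free_pair x y.
Proof.
  intros Cxy F.
  apply (F [(false, false); (true, false); (false, true); (true, true)]).
  - simpl. unfold inverse_letters; simpl.
    repeat split; intros [E _]; discriminate E.
  - discriminate.
  - unfold eval_word, eval_letter; simpl.
    rewrite gmul_1r, !gmul_assoc, Cxy, <- (gmul_assoc _ y x), gmul_Vr, gmul_1r, gmul_Vr.
    reflexivity.
Qed.

Lemma narrow_of_commutative (H : G -> Prop) :
  (forall x y, H x -> H y -> gmul x y = gmul y x) -> narrow G H.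
Proof.
  intros C [x [y [Hx [Hy F]]]]. exact (commuting_not_free_pair x y (C x y Hx Hy) F).
Qed.

Lemma center_commutative (N : G -> Prop) (x y : G) :
  center G N x -> center G N y -> gmul x y = gmul y x.
Proof. intros [_ Cx] [Ny _]. exact (Cx y Ny). Qed.

Lemma center_subgroup (N : G -> Prop) : is_subgroup G N -> is_subgroup G (center G N).
Proof.
  intros [N1 [NM NI]]. split; [|split].
  - split; [exact N1|]. intros n _. rewrite gmul_1l, gmul_1r. reflexivity.
  - intros x y [Nx Cx] [Ny Cy]. split; [auto|]. intros n Nn.
    rewrite <- gmul_assoc, Cy, gmul_assoc, Cx, gmul_assoc by auto. reflexivity.
  - intros x [Nx Cx]. split; [auto|]. intros n Nn.
    apply (mul_cancel_l x).
    rewrite gmul_assoc, gmul_Vr, gmul_1l, gmul_assoc, Cx, <- gmul_assoc, gmul_Vr, gmul_1r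
      by auto.
    reflexivity.
Qed.

Lemma center_normal (N : G -> Prop) : is_normal G N -> is_normal G (center G N).
Proof.
  intros [SN NC]. split; [exact (center_subgroup N SN)|].
  intros g z [Nz Cz]. split; [auto|]. intros n Nn.
  (* n is the conjugate by g of an element of N, which commutes with z *)
  rewrite <- (conj_invK g n), <- !conj_mul, Cz by auto. reflexivity.
Qed.

End GroupFacts.

Theorem proposition3p7 (G : Group) (N : G -> Prop) :
  is_normal G N ->
  (forall H : G -> Prop, is_normal G H -> narrow G H -> is_trivial G H) ->
  is_trivial G (center G N).
Proof.
  intros HN Hall. apply Hall.
  - exact (center_normal G N HN).
  - apply narrow_of_commutative. apply center_commutative.
Qed.
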